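(* Let $0<r<q-1$, $n\ge1$, $0\le k,s\le q-1$, and let $\begin{pmatrix}a&b\\c&d\end{pmatrix}\in I$. If $s_n^k$ and $t_n^s$ are $I(1)$-invariant modulo $(\mathrm{Ker}\,T_{-1,0},\mathrm{Ker}\,T_{1,2})$, then they are $I$-eigenvectors, with (1) $\begin{pmatrix}a&b\\c&d\end{pmatrix}\cdot s_n^k=\bar d^{\,r}(\bar d\bar a^{-1})^ks_n^k$, (2) $\begin{pmatrix}a&b\\c&d\end{pmatrix}\cdot t_n^s=\bar a^{\,r}(\bar d\bar a^{-1})^st_n^s$.
   Context: $F$ is a finite extension of $\mathbb Q_p$ with ring of integers $\mathcal O$, uniformizer $\varpi$, residue field $\mathbb F_q$; $[x]$ is the multiplicative representative of $x\in\mathbb F_q$, $\bar a\in\mathbb F_q\subset\overline{\mathbb F}_p$ the reduction of $a\in\mathcal O$; convention $0^0=1$. $G=\mathrm{GL}_2(F)$, $K=\mathrm{GL}_2(\mathcal O)$, $Z$ the centre, $I$ the Iwahori subgroup of $K$ (lower-left entry in $\varpi\mathcal O$), $I(1)$ the pro-$p$ Iwahori (elements of $I$ with diagonal entries $\equiv1\bmod\varpi$). $\chi_r:IZ\to\overline{\mathbb F}_p^\times$, $\begin{pmatrix} a&b\\ \varpi c&d\end{pmatrix}\mapsto\bar d^{\,r}$, $\mathrm{diag}(\varpi,\varpi)\mapsto1$; in the compact induction $\mathrm{ind}_{IZ}^G\chi_r$, $[g,1]$ is the element supported on $IZg^{-1}$ with value $1$ at $g^{-1}$, so $h[g,1]=[hg,1]$.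 $\beta=\begin{pmatrix}0&1\\ \varpi&0\end{pmatrix}$, $w=\begin{pmatrix}0&1\\1&0\end{pmatrix}$. $T_{-1,0},T_{1,2}$ are the $G$-endomorphisms with $T_{-1,0}[g,1]=\sum_{\lambda\in I_1}[g\begin{pmatrix}\varpi&\lambda\\0&1\end{pmatrix},1]$, $T_{1,2}[g,1]=\sum_{\lambda\in I_1}[g\beta\begin{pmatrix}1&\lambda\\0&1\end{pmatrix}w,1]$; $(\mathrm{Ker}\,T_{-1,0},\mathrm{Ker}\,T_{1,2})$ denotes $\mathrm{Ker}\,T_{-1,0}+\mathrm{Ker}\,T_{1,2}$. $I_n=\{\sum_{i=0}^{n-1}[\mu_i]\varpi^i:\mu_i\in\mathbb F_q\}$, digits $\mu_i$, truncation $[\mu]_m=\sum_{i<m}[\mu_i]\varpi^i$. $s_n^k=\sum_{\mu\in I_n}\mu_{n-1}^k[\begin{pmatrix}\varpi^n&\mu\\0&1\end{pmatrix},1]$ and $t_n^s=\sum_{\mu\in I_n}\mu_{n-1}^s[\begin{pmatrix}\varpi^{n-1}&[\mu]_{n-1}\\0&1\end{pmatrix}\begin{pmatrix}1&[\mu_{n-1}]\\0&1\end{pmatrix}w,1]$. *)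

From HB Require Import structures.
From mathcomp Require Import all_boot all_algebra.
From Stdlib Require Import ClassicalEpsilon.
Set Implicit Arguments.
Unset Strict Implicit.
Unset Printing Implicit Defensive.
Import GRing.Theory.
Local Open Scope ring_scope.

(* A p-adic field F (finite extension of Q_p), presented as a complete
   discretely valued field of characteristic 0 with finite residue field
   of characteristic p. *)
Record padic_field := PadicField {
  pf_F : fieldType;
  pf_O : pred pf_F;
  pf_pi : pf_F;
  pf_k : finFieldType;
  pf_p : nat;
  pf_red : pf_F -> pf_k;
  pf_teich : pf_k -> pf_F;
  pf_O0 : pf_O 0;
  pf_O1 : pf_O 1;
  pf_OB : forall x y, pf_O x -> pf_O y -> pf_O (x - y);
  pf_OM : forall x y, pf_O x -> pf_O y -> pf_O (x * y);
  pf_piO : pf_O pf_pi;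
  pf_pi_neq0 : pf_pi != 0;
  pf_pi_nonunit : ~~ pf_O pf_pi^-1;
  pf_decomp : forall x, x != 0 ->
     exists m : int, exists2 u, pf_O u && pf_O u^-1 & x = u * pf_pi ^ m;
  pf_complete : forall c : nat -> pf_F, (forall i, pf_O (c i)) ->
     exists2 x, pf_O x & forall n, pf_O ((x - \sum_(i < n) c i * pf_pi ^+ i) / pf_pi ^+ n);
  pf_red1 : pf_red 1 = 1;
  pf_redD : forall x y, pf_O x -> pf_O y -> pf_red (x + y) = pf_red x + pf_red y;
  pf_redM : forall x y, pf_O x -> pf_O y -> pf_red (x * y) = pf_red x * pf_red y;
  pf_red_ker : forall x, pf_O x -> (pf_red x == 0) = pf_O (x / pf_pi);
  pf_red_surj : forall c, exists2 x, pf_O x & pf_red x = c;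
  pf_teichO : forall c, pf_O (pf_teich c);
  pf_teich_red : forall c, pf_red (pf_teich c) = c;
  pf_teichM : forall c d, pf_teich (c * d) = pf_teich c * pf_teich d;
  pf_char0 : [pchar pf_F] =i pred0;
  pf_p_prime : prime pf_p;
  pf_p_char : pf_p \in [pchar pf_k]
}.

Definition i0 : 'I_2 := ord0.
Definition i1 : 'I_2 := ord_max.

Definition mx2 (R : Type) (a b c d : R) : 'M[R]_2 :=
  \matrix_(i < 2, j < 2)
    if i == i0 then (if j == i0 then a else b) else (if j == i0 then c else d).

Section Ind.
Variable LF : padic_field.
Local Notation F := (pf_F LF).
Local Notation O := (@pf_O LF).
Local Notation pi := (@pf_pi LF).
Local Notation kq := (pf_k LF).
Local Notation red := (@pf_red LF).
Local Notation teich := (@pf_teich LF).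

Definition in_I (g : 'M[F]_2) : Prop :=
  [/\ O (g i0 i0), O (g i0 i1), O (g i1 i0 / pi), O (g i1 i1)
    & (\det g != 0) && O (\det g)^-1].

Definition in_I1 (g : 'M[F]_2) : Prop :=
  [/\ in_I g, red (g i0 i0) = 1 & red (g i1 i1) = 1].

Definition betamx : 'M[F]_2 := mx2 0 1 pi 0.
Definition wmx : 'M[F]_2 := mx2 0 1 1 0.

Variable K : fieldType.
Variable iota : kq -> K.
Variable r : nat.

(* chi_r on IZ = { varpi^m h : h in I }, extended by 0 outside IZ *)
Definition chiIZ (x : 'M[F]_2) : K :=
  match excluded_middle_informative (exists m : int, in_I (pi ^ (- m) *: x)) with
  | left H =>
      let m := proj1_sig (constructive_indefinite_description _ H) in
      iota (red ((pi ^ (- m) *: x) i1 i1)) ^+ r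
  | right _ => 0
  end.

(* elements of ind_{IZ}^G chi_r are functions G -> K; [g,1] is x |-> chi(x g) *)
Definition br (g : 'M[F]_2) : 'M[F]_2 -> K := fun x => chiIZ (x *m g).

(* G-action: (h f)(x) = f(x h), so that h [g,1] = [hg,1] *)
Definition act (h : 'M[F]_2) (f : 'M[F]_2 -> K) : 'M[F]_2 -> K :=
  fun x => f (x *m h).

(* the element sum_{i<m} [mu_i] varpi^i of I_m with digits d *)
Definition trunc (m : nat) (d : seq kq) : F :=
  \sum_(i < m) teich (nth 0 d i) * pi ^+ i.

Definition s_nk (n k : nat) : 'M[F]_2 -> K := fun x =>
  \sum_(d : n.-tuple kq)
     iota (nth 0 (tval d) n.-1) ^+ k * br (mx2 (pi ^+ n) (trunc n d) 0 1) x.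

Definition t_ns (n s : nat) : 'M[F]_2 -> K := fun x =>
  \sum_(d : n.-tuple kq)
     iota (nth 0 (tval d) n.-1) ^+ s *
       br (mx2 (pi ^+ n.-1) (trunc n.-1 d) 0 1
           *m mx2 1 (teich (nth 0 (tval d) n.-1)) 0 1 *m wmx) x.

(* T_{-1,0}[g,1] and T_{1,2}[g,1]; I_1 = { [c] : c in F_q } *)
Definition Tm10 (g : 'M[F]_2) : 'M[F]_2 -> K := fun x =>
  \sum_(c : kq) br (g *m mx2 pi (teich c) 0 1) x.
Definition T12 (g : 'M[F]_2) : 'M[F]_2 -> K := fun x =>
  \sum_(c : kq) br (g *m betamx *m mx2 1 (teich c) 0 1 *m wmx) x.

(* finite formal combinations sum c_i [g_i,1] and the extension of T by linearity *)
Definition evalL (L : seq (K * 'M[F]_2)) : 'M[F]_2 -> K := fun x =>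
  \sum_(q <- L) q.1 * br q.2 x.
Definition applyT (T : 'M[F]_2 -> 'M[F]_2 -> K) (L : seq (K * 'M[F]_2))
  : 'M[F]_2 -> K := fun x => \sum_(q <- L) q.1 * T q.2 x.

Definition inKerSum (f : 'M[F]_2 -> K) : Prop :=
  exists L1 L2,
    (forall x, f x = evalL L1 x + evalL L2 x) /\
    (forall x, applyT Tm10 L1 x = 0) /\ (forall x, applyT T12 L2 x = 0).

Definition I1_inv_mod (f : 'M[F]_2 -> K) : Prop :=
  forall u, in_I1 u -> inKerSum (fun x => act u f x - f x).

Definition eigen_mod (h : 'M[F]_2) (e : K) (f : 'M[F]_2 -> K) : Prop :=
  inKerSum (fun x => act h f x - e * f x).

End Ind.

(* Every g in I factors as g = t u with t = diag([a-bar], [d-bar]) and u in I(1).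
   The kernels of T_{-1,0} and T_{1,2} are G-stable, so I(1)-invariance modulo
   their sum leaves only the action of t to compute, and that action is exact:
   t rescales the digits mu_i by a-bar / d-bar, which a reindexing of the digit
   sum absorbs, and t then passes to the right of each [g,1], where chi_r
   contributes d-bar^r (a-bar^r for t_n^s, because w swaps the diagonal). *)

From mathcomp Require Import all_boot all_algebra.
From mathcomp Require Import ring zify.
From Stdlib Require Import ClassicalEpsilon.
Import GRing.Theory.
Local Open Scope ring_scope.

Notation diag2 a d := (mx2 a 0 0 d).

Lemma mx2E (R : Type) (a b c d : R) :
  (mx2 a b c d i0 i0 = a) * (mx2 a b c d i0 i1 = b) *
  (mx2 a b c d i1 i0 = c) * (mx2 a b c d i1 i1 = d).
Proof. by rewrite !mxE. Qed.

Lemma mx2_eta (R : Type) (A : 'M[R]_2) :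
  A = mx2 (A i0 i0) (A i0 i1) (A i1 i0) (A i1 i1).
Proof.
apply/matrixP => i j; rewrite !mxE.
by case: i => [[|[|i]] Hi]; case: j => [[|[|j]] Hj] //=; congr (A _ _); apply: val_inj.
Qed.

Section Mx2Algebra.
Variable R : comNzRingType.

Lemma mx2_mul (a b c d a' b' c' d' : R) :
  mx2 a b c d *m mx2 a' b' c' d' =
  mx2 (a * a' + b * c') (a * b' + b * d') (c * a' + d * c') (c * b' + d * d').
Proof.
apply/matrixP => i j; rewrite !mxE big_ord_recl big_ord1 !mxE.
by case: i => [[|[|i]] Hi]; case: j => [[|[|j]] Hj].
Qed.

Lemma mx2_det (a b c d : R) : \det (mx2 a b c d) = a * d - b * c.
Proof.
rewrite (expand_det_row _ ord0) big_ord_recl big_ord1 /cofactor !det_mx11 !mxE /=.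
by rewrite expr0 expr1 mul1r mulN1r mulrN.
Qed.

Lemma mx2_1 : mx2 1 0 0 1 = 1%:M :> 'M[R]_2.
Proof.
apply/matrixP => i j; rewrite !mxE.
by case: i => [[|[|i]] Hi]; case: j => [[|[|j]] Hj].
Qed.

Lemma mulmx_diag2 (a d a' d' : R) : diag2 a d *m diag2 a' d' = diag2 (a * a') (d * d').
Proof. by rewrite mx2_mul; congr mx2; ring. Qed.

Lemma diag2_mul_affine (c de p x : R) :
  diag2 (c * de) de *m mx2 p x 0 1 = mx2 p (c * x) 0 1 *m diag2 (c * de) de.
Proof. by rewrite !mx2_mul; congr mx2; ring. Qed.

Lemma diag2_mul_affine_w (c de p x y : R) :
  diag2 (c * de) de *m (mx2 p x 0 1 *m mx2 1 y 0 1 *m mx2 0 1 1 0)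
  = mx2 p (c * x) 0 1 *m mx2 1 (c * y) 0 1 *m mx2 0 1 1 0 *m diag2 de (c * de).
Proof. by rewrite !mx2_mul; congr mx2; ring. Qed.

End Mx2Algebra.
Section Iwahori.
Context {LF : padic_field}.
Local Notation F := (pf_F LF).
Local Notation O := (@pf_O LF).
Local Notation pi := (@pf_pi LF).
Local Notation kq := (pf_k LF).
Local Notation red := (@pf_red LF).
Local Notation teich := (@pf_teich LF).
Implicit Types (x y : F) (g h : 'M[F]_2).

Lemma O_opp {x} : O x -> O (- x).
Proof. by move=> Ox; have := pf_OB (pf_O0 LF) Ox; rewrite sub0r. Qed.

Lemma O_add {x y} : O x -> O y -> O (x + y).
Proof. by move=> Ox Oy; have := pf_OB Ox (O_opp Oy); rewrite opprK. Qed.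

Lemma O_exp {x} N : O x -> O (x ^+ N).
Proof. by move=> Ox; elim: N => [|N IH]; rewrite ?expr0 ?pf_O1 // exprS pf_OM. Qed.

Lemma O_of_div_pi {x} : O (x / pi) -> O x.
Proof. by move=> Ox; rewrite -(divfK (pf_pi_neq0 LF) x) pf_OM ?pf_piO. Qed.

Lemma red_sub {x y} : O x -> O y -> red (x - y) = red x - red y.
Proof.
by move=> Ox Oy; have := pf_redD (pf_OB Ox Oy) Oy; rewrite subrK => ->; rewrite addrK.
Qed.

Lemma red0 : red 0 = 0.
Proof. by have := red_sub (pf_O0 LF) (pf_O0 LF); rewrite !subrr. Qed.

Lemma red_pi : red pi = 0.
Proof. by have := pf_red_ker (pf_piO LF); rewrite divff ?pf_pi_neq0 // pf_O1 => /eqP. Qed.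

Lemma teich_neq0 {c} : c != 0 -> teich c != 0.
Proof. by apply: contraNneq => tc0; rewrite -(pf_teich_red c) tc0 red0. Qed.

Lemma teichV c : c != 0 -> teich c^-1 = (teich c)^-1.
Proof.
move=> c0; have t1 : teich 1 = 1.
  have t1nz : teich 1 != 0 := teich_neq0 (oner_neq0 kq).
  by apply: (mulfI t1nz); rewrite mulr1 -pf_teichM mulr1.
have tc0 := teich_neq0 c0.
by apply: (mulfI tc0); rewrite -pf_teichM !divff.
Qed.

Definition Ounit x := [&& x != 0, O x & O x^-1].

Lemma OunitV {x} : Ounit x -> Ounit x^-1.
Proof. by case/and3P => *; rewrite /Ounit invr_eq0 invrK; apply/and3P. Qed.

Lemma OunitM {x y} : Ounit x -> Ounit y -> Ounit (x * y).
Proof.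
case/and3P => x0 Ox Ox'; case/and3P => y0 Oy Oy'.
by rewrite /Ounit mulf_neq0 ?pf_OM //= invfM pf_OM.
Qed.

Lemma Ounit_teich c : c != 0 -> Ounit (teich c).
Proof. by move=> c0; rewrite /Ounit teich_neq0 // pf_teichO -teichV // pf_teichO. Qed.

Lemma Ounit_exprz_pi (m : int) : Ounit (pi ^ m) -> m = 0.
Proof.
have pi_nonunit N : ~~ O (pi ^+ N.+1)^-1.
  apply: contra (pf_pi_nonunit LF) => ON.
  have -> : pi^-1 = (pi ^+ N.+1)^-1 * pi ^+ N.
    by rewrite exprS invfM -mulrA mulVf ?mulr1 // expf_neq0 // pf_pi_neq0.
  by rewrite pf_OM // O_exp // pf_piO.
case: m => [[|N]|N] //; case/and3P => _ O1 O2.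
  by move: O2; rewrite (negbTE (pi_nonunit N)).
by move: O1; rewrite /exprz (negbTE (pi_nonunit N)).
Qed.

Lemma in_I_mx2 a b c d : in_I (mx2 a b c d) <->
  [/\ O a, O b, O (c / pi), O d & Ounit (a * d - b * c)].
Proof.
rewrite /in_I !mx2E mx2_det /Ounit; split.
  case=> Oa Ob Oc Od /andP[D0 D'].
  have Oc' := O_of_div_pi Oc.
  by split => //; rewrite D0 D' pf_OB ?pf_OM.
by case=> Oa Ob Oc Od /and3P[D0 _ D']; split => //; apply/andP.
Qed.

Lemma in_I_Ounit_det {g} : in_I g -> Ounit (\det g).
Proof. by rewrite [g]mx2_eta in_I_mx2 mx2_det => -[]. Qed.

Lemma in_IM {g h} : in_I g -> in_I h -> in_I (g *m h).
Proof.
move=> Ig Ih; rewrite /in_I detM.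
have /and3P[gh0 _ gh'] := OunitM (in_I_Ounit_det Ig) (in_I_Ounit_det Ih).
split; last by rewrite gh0.
all: move: Ig Ih; rewrite [g]mx2_eta [h]mx2_eta mx2_mul !mx2E !in_I_mx2.
all: move=> [Oa Ob Oc Od _] [Oa' Ob' Oc' Od' _].
all: have [Oc1 Oc1'] := (O_of_div_pi Oc, O_of_div_pi Oc').
1,2,4: by rewrite O_add ?pf_OM.
have -> : (g i1 i0 * h i0 i0 + g i1 i1 * h i1 i0) / pi
        = g i1 i0 / pi * h i0 i0 + g i1 i1 * (h i1 i0 / pi) by ring.
by rewrite O_add // pf_OM.
Qed.

Lemma in_I_diag2 {al de} : Ounit al -> Ounit de -> in_I (diag2 al de).
Proof.
move=> Ual Ude; apply/in_I_mx2; rewrite !mul0r subr0.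
have /and3P[_ Oal _] := Ual; have /and3P[_ Ode _] := Ude.
by split; rewrite ?pf_O0 ?OunitM.
Qed.

Lemma in_I_mulmx_diag2 g al de : Ounit al -> Ounit de ->
  in_I (g *m diag2 al de) <-> in_I g.
Proof.
move=> Ual Ude; split => Ig; last exact: in_IM Ig (in_I_diag2 Ual Ude).
have := in_IM Ig (in_I_diag2 (OunitV Ual) (OunitV Ude)).
case/and3P: Ual => al0 _ _; case/and3P: Ude => de0 _ _.
by rewrite -mulmxA mulmx_diag2 !divff // mx2_1 mulmx1.
Qed.

Lemma in_I_scale_exprz_pi_inj {g} {m m' : int} :
  in_I (pi ^ (- m) *: g) -> in_I (pi ^ (- m') *: g) -> m = m'.
Proof.
move=> /in_I_Ounit_det Dm /in_I_Ounit_det Dm'.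
have /and3P[+ _ _] := Dm; rewrite detZ mulf_eq0 negb_or => /andP[_ Dg0].
have := OunitM Dm (OunitV Dm'); rewrite !detZ invfM mulrACA divff // mulr1.
rewrite -expr_div_n invr_expz opprK -expfzDr ?pf_pi_neq0 // expr2 -expfzDr ?pf_pi_neq0 //.
by move/Ounit_exprz_pi; lia.
Qed.

Lemma red_Ounit_neq0 x : Ounit x -> red x != 0.
Proof.
case/and3P=> x0 Ox Ox'; apply: contra_neq (@oner_neq0 kq) => rx0.
by rewrite -(pf_red1 LF) -(divff x0) pf_redM // rx0 mul0r.
Qed.

Lemma in_I_red_diag {a b c d} : in_I (mx2 a b c d) -> red a != 0 /\ red d != 0.
Proof.
case/in_I_mx2 => Oa Ob Oc Od /[dup] /red_Ounit_neq0 + /and3P[_ Odet _].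
have Oc' := O_of_div_pi Oc.
have rc0 : red c = 0 by rewrite -(divfK (pf_pi_neq0 LF) c) pf_redM ?pf_piO // red_pi mulr0.
by rewrite red_sub ?pf_OM // !pf_redM // rc0 mulr0 subr0 mulf_eq0 negb_or => /andP.
Qed.

Lemma in_I_decomp {a b c d} : in_I (mx2 a b c d) ->
  exists2 u, in_I1 u & mx2 a b c d = diag2 (teich (red a)) (teich (red d)) *m u.
Proof.
move=> Ig; have [ra0 rd0] := in_I_red_diag Ig.
set al := teich (red a); set de := teich (red d).
have [al0 de0] : al != 0 /\ de != 0 by rewrite !teich_neq0.
exists (diag2 al^-1 de^-1 *m mx2 a b c d); last first.
  by rewrite mulmxA mulmx_diag2 !divff // mx2_1 mul1mx.
split; first by apply: in_IM Ig; apply: in_I_diag2; apply: OunitV; apply: Ounit_teich.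
all: case/in_I_mx2: Ig => Oa _ _ Od _.
all: rewrite mx2_mul !mx2E !mul0r ?addr0 ?add0r pf_redM -?teichV ?pf_teichO //.
all: by rewrite pf_teich_red mulVf.
Qed.

Section InducedRepresentation.
Variables (K : fieldType) (iota : {rmorphism kq -> K}) (r : nat).
Implicit Types (f : 'M[F]_2 -> K) (e : K).

Lemma chiIZ_in_I {g m} : in_I (pi ^ (- m) *: g) ->
  chiIZ iota r g = iota (red ((pi ^ (- m) *: g) i1 i1)) ^+ r.
Proof.
move=> Ig; rewrite /chiIZ; case: excluded_middle_informative => [ex | []]; last by exists m.
case: (constructive_indefinite_description _ ex) => m' Ig' /=.
by rewrite (in_I_scale_exprz_pi_inj Ig' Ig).
Qed.

Lemma chiIZ_out g : ~ (exists m, in_I (pi ^ (- m) *: g)) -> chiIZ iota r g = 0.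
Proof. by move=> N; rewrite /chiIZ; case: excluded_middle_informative. Qed.

Lemma chiIZ_mulmx_diag2 g al de : Ounit al -> Ounit de ->
  chiIZ iota r (g *m diag2 al de) = chiIZ iota r g * iota (red de) ^+ r.
Proof.
move=> Ual Ude.
have [[m Ig] | N] := excluded_middle_informative (exists m, in_I (pi ^ (- m) *: g)).
  have Igd : in_I (pi ^ (- m) *: (g *m diag2 al de)) by rewrite scalemxAl in_I_mulmx_diag2.
  rewrite (chiIZ_in_I Igd) (chiIZ_in_I Ig) scalemxAl [X in X *m _]mx2_eta mx2_mul !mx2E.
  case: Ig => _ _ _ Oy _; case/and3P: Ude => _ Ode _.
  by rewrite mulr0 add0r pf_redM // rmorphM exprMn.
rewrite !chiIZ_out ?mul0r // => -[m Igd]; apply: N; exists m.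
by rewrite scalemxAl in_I_mulmx_diag2 in Igd.
Qed.

Lemma inKerSum_ext {f f'} : f =1 f' -> inKerSum iota r f -> inKerSum iota r f'.
Proof. by move=> ff' [L1 [L2 [Df KL]]]; exists L1, L2; split => // x; rewrite -ff'. Qed.

Lemma inKerSum_act h {f} : inKerSum iota r f -> inKerSum iota r (act h f).
Proof.
move=> [L1 [L2 [Df [KL1 KL2]]]].
pose hL (L : seq (K * 'M[F]_2)) := [seq (q.1, h *m q.2) | q <- L].
exists (hL L1), (hL L2); split; [|split] => x.
- by rewrite /act Df /evalL !big_map /br; congr (_ + _); apply: eq_bigr => q _; rewrite mulmxA.
- rewrite -(KL1 (x *m h)) /applyT big_map; apply: eq_bigr => q _; congr (_ * _).
  by apply: eq_bigr => c _; rewrite /br !mulmxA.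
- rewrite -(KL2 (x *m h)) /applyT big_map; apply: eq_bigr => q _; congr (_ * _).
  by apply: eq_bigr => c _; rewrite /br !mulmxA.
Qed.

Lemma eigen_mod_mulmx t u e f : act t f =1 (fun g => e * f g) ->
  I1_inv_mod iota r f -> in_I1 u -> eigen_mod iota r (t *m u) e f.
Proof.
move=> tf finv Iu; apply: inKerSum_ext (inKerSum_act t (finv u Iu)) => g.
by rewrite -tf /act mulmxA.
Qed.

Lemma nth_scale (c : kq) s i : nth 0 [seq c * v | v <- s] i = c * nth 0 s i.
Proof. by elim: s i => [|v s IHs] [|i] //=; rewrite mulr0. Qed.

Lemma trunc_scale (c : kq) m s : trunc m [seq c * v | v <- s] = teich c * trunc m s.
Proof.
by rewrite /trunc mulr_sumr; apply: eq_bigr => i _; rewrite nth_scale pf_teichM mulrA.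
Qed.

Lemma map_tuple_scale_inj n {c : kq} : c != 0 ->
  injective (map_tuple (fun v => c * v) : n.-tuple kq -> n.-tuple kq).
Proof. by move=> c0 t t' /(congr1 val) /(inj_map (mulfI c0)) /val_inj. Qed.

Lemma act_diag2_s_nk (al de : kq) n k g : al != 0 -> de != 0 ->
  act (diag2 (teich al) (teich de)) (s_nk iota r n k) g
  = iota de ^+ r * (iota de / iota al) ^+ k * s_nk iota r n k g.
Proof.
move=> al0 de0; set c := al / de; have c0 : c != 0 by rewrite mulf_neq0 ?invr_eq0.
have -> : teich al = teich c * teich de by rewrite -pf_teichM divfK.
have -> : iota de / iota al = (iota c)^-1.
  by rewrite fmorph_div; field; rewrite !fmorph_eq0 al0 de0.
have iotack0 : iota c ^+ k != 0 by rewrite expf_neq0 // fmorph_eq0.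
rewrite /act /s_nk [in RHS](reindex_inj (map_tuple_scale_inj n c0)) mulr_sumr.
apply: eq_bigr => t _; rewrite /br nth_scale trunc_scale -mulmxA diag2_mul_affine mulmxA.
rewrite chiIZ_mulmx_diag2 ?OunitM ?Ounit_teich // pf_teich_red rmorphM exprMn exprVn.
by field.
Qed.

Lemma act_diag2_t_ns (al de : kq) n s g : al != 0 -> de != 0 ->
  act (diag2 (teich al) (teich de)) (t_ns iota r n s) g
  = iota al ^+ r * (iota de / iota al) ^+ s * t_ns iota r n s g.
Proof.
move=> al0 de0; set c := al / de; have c0 : c != 0 by rewrite mulf_neq0 ?invr_eq0.
have tal : teich al = teich c * teich de by rewrite -pf_teichM divfK.
have -> : iota de / iota al = (iota c)^-1.
  by rewrite fmorph_div; field; rewrite !fmorph_eq0 al0 de0.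
have iotacs0 : iota c ^+ s != 0 by rewrite expf_neq0 // fmorph_eq0.
rewrite /act /t_ns [in RHS](reindex_inj (map_tuple_scale_inj n c0)) mulr_sumr.
apply: eq_bigr => t _; rewrite /br /wmx !nth_scale trunc_scale pf_teichM tal.
rewrite -mulmxA diag2_mul_affine_w !mulmxA -tal.
rewrite chiIZ_mulmx_diag2 ?Ounit_teich // pf_teich_red rmorphM exprMn exprVn.
by field.
Qed.

End InducedRepresentation.
End Iwahori.

Theorem lemma4p3 (LF : padic_field) (K : closedFieldType)
  (iota : {rmorphism pf_k LF -> K})
  (HK : forall x : K, exists2 m, (0 < m)%N & x ^+ (pf_p LF ^ m) = x)
  (r n k s : nat) (a b c d : pf_F LF) :
  (0 < r)%N -> (r < #|pf_k LF| - 1)%N -> (1 <= n)%N ->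
  (k <= #|pf_k LF| - 1)%N -> (s <= #|pf_k LF| - 1)%N ->
  in_I (mx2 a b c d) ->
  I1_inv_mod iota r (s_nk iota r n k) ->
  I1_inv_mod iota r (t_ns iota r n s) ->
  eigen_mod iota r (mx2 a b c d)
    (iota (@pf_red LF d) ^+ r * (iota (@pf_red LF d) / iota (@pf_red LF a)) ^+ k)
    (s_nk iota r n k)
  /\
  eigen_mod iota r (mx2 a b c d)
    (iota (@pf_red LF a) ^+ r * (iota (@pf_red LF d) / iota (@pf_red LF a)) ^+ s)
    (t_ns iota r n s).
Proof.
move=> _ _ _ _ _ Ig s_inv t_inv.
have [ra0 rd0] := in_I_red_diag Ig.
have [u Iu ->] := in_I_decomp Ig.
split; apply: eigen_mod_mulmx => // g.
- exact: act_diag2_s_nk.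
- exact: act_diag2_t_ns.
Qed.
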